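(* Let $\tilde X=J_n^*XJ_n\in S_{n+1}$ with $X\in M_n$ real or complex (of arbitrary rank), and let $k_n$ be any invertible $n\times n$ matrix with $K_n=k_nk_n^*$ (e.g. the Cholesky factor). Then the Moore–Penrose inverse of $\tilde X$ lies in $S_{n+1}$ and equals $\phi(X^\oplus)=J_n^*X^\oplus J_n$, where $X^\oplus:=(k_n^{-1})^*(k_n^*Xk_n)^+k_n^{-1}$ is the $\circ$-Moore–Penrose inverse of $X$; that is, \[\tilde X^+=J_n^*(k_n^{-1})^*(k_n^*Xk_n)^+k_n^{-1}J_n,\] and also \[\tilde X^+=J_n^*\Big(\lim_{\delta\downarrow0}(X^*K_nXK_n+\delta I_n)^{-1}X^*\Big)J_n,\] where the limit is over real $\delta>0$.
   Context: Matrices are over $\mathbb R$ or $\mathbb C$; $A^*$ denotes conjugate transpose and $A^+$ the Moore–Penrose inverse (the unique $B$ with $ABA=A$, $BAB=B$, $(AB)^*=AB$, $(BA)^*=BA$). $M_n$ is the set of $n\times n$ matrices; $S_{n}$ is the set of $n\times n$ matrices all of whose row sums and column sums are zero. $\mathbf 1$ is the all-ones column vector, $J_n:=[I_n\mid -\mathbf 1]$ (an $n\times(n+1)$ matrix), $K_n:=J_nJ_n^*=I_n+\mathbf 1\mathbf 1^*$ (symmetric positive definite), $\phi(X):=J_n^*XJ_n$. On $M_n$, $X\circ Y:=XK_nY$, and a $\circ$-Moore–Penrose inverse of $X$ is a $Y\in M_n$ with $X\circ Y\circ X=X$, $Y\circ X\circ Y=Y$, $(X\circ Y)^*=X\circ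 Y$, $(Y\circ X)^*=Y\circ X$. *)

(* Scalars: any numClosedFieldType C (e.g. algC), which
   covers complex matrices, and real matrices as those with real entries. *)
From HB Require Import structures.
From mathcomp Require Import all_boot all_order all_algebra.
Set Implicit Arguments. Unset Strict Implicit. Unset Printing Implicit Defensive.
Import Order.TTheory GRing.Theory Num.Theory.
Local Open Scope ring_scope.

Definition ctmx (C : numClosedFieldType) m n (A : 'M[C]_(m, n)) : 'M[C]_(n, m) :=
  (map_mx Num.conj A)^T.

Definition is_MP (C : numClosedFieldType) m n (A : 'M[C]_(m, n)) (B : 'M[C]_(n, m)) :=
  [/\ A *m B *m A = A, B *m A *m B = B,
      ctmx (A *m B) = A *m B & ctmx (B *m A) = B *m A].

Definition in_S (C : numClosedFieldType) n (A : 'M[C]_n) :=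
  (forall i, \sum_j A i j = 0) /\ (forall j, \sum_i A i j = 0).

Definition Jn (C : numClosedFieldType) n : 'M[C]_(n, n + 1) :=
  row_mx 1%:M (- const_mx 1).

Definition Kn (C : numClosedFieldType) n : 'M[C]_n := Jn C n *m ctmx (Jn C n).

Definition phi (C : numClosedFieldType) n (X : 'M[C]_n) : 'M[C]_(n + 1) :=
  ctmx (Jn C n) *m X *m Jn C n.

Definition circ (C : numClosedFieldType) n (X Y : 'M[C]_n) : 'M[C]_n :=
  X *m Kn C n *m Y.

Definition is_circMP (C : numClosedFieldType) n (X Y : 'M[C]_n) :=
  [/\ circ (circ X Y) X = X, circ (circ Y X) Y = Y,
      ctmx (circ X Y) = circ X Y & ctmx (circ Y X) = circ Y X].

(* entrywise limit of f(delta) as real delta decreases to 0 *)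
Definition mx_lim0 (C : numClosedFieldType) m p (f : C -> 'M[C]_(m, p)) (L : 'M[C]_(m, p)) :=
  forall eps : C, 0 < eps -> exists2 d : C, 0 < d &
    forall delta : C, 0 < delta -> delta < d ->
      forall i j, `|f delta i j - L i j| < eps.

From HB Require Import structures.
From mathcomp Require Import all_boot all_order all_algebra ring.
Set Implicit Arguments. Unset Strict Implicit. Unset Printing Implicit Defensive.
Import Order.TTheory GRing.Theory Num.Theory.
Local Open Scope ring_scope.

(* The proof transports Moore-Penrose identities along two product-preserving,
   adjoint-preserving maps:
   - phi turns the circ-product X o Y = X K_n Y into the ordinary product
     (phi A * phi B = phi (A o B)) and commutes with ^*, since K_n = J_n J_n^*;
     hence phi maps circ-MP pairs to MP pairs.  Its values lie in S_(n+1)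
     because J_n annihilates the all-ones vector.
   - the congruence P |-> k^-* P k^-1 turns the ordinary product into the
     circ-product when K_n = k k^*, and commutes with ^*; hence it maps the
     MP pair (k^* X k, Y) to the circ-MP pair (X, X^o).
   For the limit formula, the same congruence conjugates the regularised
   matrix X^* K X K + d to k^-* (M^* M + d) k^*, with M = k^* X k, so the
   limit reduces to the Tikhonov limit (M^* M + d)^-1 M^* --> M^+, proved
   with the Frobenius estimate d^2 |U|^2 <= |(M^* M + d) U|^2 and the exact
   error formula (M^* M + d)^-1 M^* - M^+ = d (d (M^* M + d)^-1 Z - Z),
   where Z = M^+ M^+* M^+. *)

Section ConjugateTranspose.
Variable C : numClosedFieldType.

Lemma ctmxE m n (A : 'M[C]_(m, n)) i j : ctmx A i j = (A j i)^*.
Proof. by rewrite !mxE. Qed.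

Lemma ctmxK m n (A : 'M[C]_(m, n)) : ctmx (ctmx A) = A.
Proof. by apply/matrixP=> i j; rewrite !ctmxE conjCK. Qed.

Lemma ctmxM m n p (A : 'M[C]_(m, n)) (B : 'M[C]_(n, p)) :
  ctmx (A *m B) = ctmx B *m ctmx A.
Proof. by rewrite /ctmx map_mxM trmx_mul. Qed.

Lemma ctmxD m n (A B : 'M[C]_(m, n)) : ctmx (A + B) = ctmx A + ctmx B.
Proof. by rewrite /ctmx map_mxD linearD. Qed.

Lemma ctmxZ m n (c : C) (A : 'M[C]_(m, n)) : ctmx (c *: A) = c^* *: ctmx A.
Proof. by apply/matrixP=> i j; rewrite !mxE rmorphM. Qed.

Lemma ctmx0 m n : ctmx (0 : 'M[C]_(m, n)) = 0.
Proof. by apply/matrixP=> i j; rewrite !mxE rmorph0. Qed.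

Lemma ctmx_scalar n (c : C) : ctmx (c%:M : 'M_n) = c^*%:M.
Proof. by apply/matrixP=> i j; rewrite !mxE eq_sym rmorphMn. Qed.

Lemma ctmx_const m n (c : C) : ctmx (const_mx c : 'M_(m, n)) = const_mx c^*.
Proof. by apply/matrixP=> i j; rewrite !mxE. Qed.

Lemma ctmx_invmx n (A : 'M[C]_n) : ctmx (invmx A) = invmx (ctmx A).
Proof. by rewrite /ctmx map_invmx trmx_inv. Qed.

Lemma ctmx_unitmx n (A : 'M[C]_n) : (ctmx A \in unitmx) = (A \in unitmx).
Proof. by rewrite /ctmx unitmx_tr map_unitmx. Qed.

End ConjugateTranspose.

Section PhiMap.
Variables (C : numClosedFieldType) (n : nat).

Lemma phi_circ (A B : 'M[C]_n) : phi A *m phi B = phi (circ A B).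
Proof. by rewrite /phi /circ /Kn !mulmxA. Qed.

Lemma ctmx_phi (A : 'M[C]_n) : ctmx (phi A) = phi (ctmx A).
Proof. by rewrite /phi !ctmxM ctmxK !mulmxA. Qed.

Lemma circMP_phi (X Z : 'M[C]_n) : is_circMP X Z -> is_MP (phi X) (phi Z).
Proof.
by case=> h1 h2 h3 h4; split; rewrite ?phi_circ ?ctmx_phi ?h1 ?h2 ?h3 ?h4.
Qed.

Lemma Jn_ones : Jn C n *m (const_mx 1 : 'cV[C]_(n + 1)) = 0.
Proof.
rewrite /Jn -(col_mx_const n 1 1 (1 : C)) mul_row_col mul1mx mulNmx.
by apply/matrixP=> i j; rewrite !mxE big_ord1 !mxE mulr1 subrr.
Qed.

Lemma in_S_phi (Z : 'M[C]_n) : in_S (phi Z).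
Proof.
have rowsE i : \sum_j phi Z i j = (phi Z *m (const_mx 1 : 'cV[C]_(n + 1))) i 0.
  by rewrite mxE; apply: eq_bigr => j _; rewrite [X in _ * X]mxE mulr1.
have colsE j : \sum_i phi Z i j = ((const_mx 1 : 'rV[C]_(n + 1)) *m phi Z) 0 j.
  by rewrite mxE; apply: eq_bigr => i _; rewrite [X in X * _]mxE mul1r.
have onesJ : (const_mx 1 : 'rV[C]_(n + 1)) *m ctmx (Jn C n) = 0.
  have ct1 : ctmx (const_mx 1 : 'cV[C]_(n + 1)) = const_mx 1 by rewrite ctmx_const conjC1.
  by rewrite -ct1 -ctmxM Jn_ones ctmx0.
split=> [i | j]; first by rewrite rowsE /phi -mulmxA Jn_ones mulmx0 mxE.
by rewrite colsE /phi !mulmxA onesJ !mul0mx mxE.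
Qed.

End PhiMap.

Section FrobeniusNorm.
Variable C : numClosedFieldType.

Definition fnorm2 m p (U : 'M[C]_(m, p)) : C := \tr (ctmx U *m U).

Lemma fnorm2E m p (U : 'M[C]_(m, p)) : fnorm2 U = \sum_j \sum_i `|U i j| ^+ 2.
Proof.
apply: eq_bigr => j _; rewrite mxE.
by apply: eq_bigr => i _; rewrite ctmxE normCKC.
Qed.

Lemma fnorm2_ge0 m p (U : 'M[C]_(m, p)) : 0 <= fnorm2 U.
Proof. by rewrite fnorm2E; do 2!apply: sumr_ge0 => ? _; apply: exprn_ge0. Qed.

Lemma ler_sum_term (I : finType) (F : I -> C) i :
  (forall j, 0 <= F j) -> F i <= \sum_j F j.
Proof. by move=> F_ge0; rewrite (bigD1 i) //= lerDl sumr_ge0. Qed.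

Lemma fnorm2_entry m p (U : 'M[C]_(m, p)) i j : `|U i j| ^+ 2 <= fnorm2 U.
Proof.
rewrite fnorm2E; apply: le_trans (ler_sum_term _ _) => [|l]; last first.
  by apply: sumr_ge0 => ? _; apply: exprn_ge0.
by apply: ler_sum_term => l; apply: exprn_ge0.
Qed.

Lemma fnorm2_eq0 m p (U : 'M[C]_(m, p)) : fnorm2 U = 0 -> U = 0.
Proof.
move=> U0; apply/matrixP=> i j; rewrite mxE.
have : `|U i j| ^+ 2 <= 0 by rewrite -U0 fnorm2_entry.
by rewrite -normrX normr_le0 expf_eq0 /= => /eqP.
Qed.

(* A bound |x|^2 <= c turned into a bound on |x| without square roots. *)
Lemma normr_le1D (x c : C) : `|x| ^+ 2 <= c -> `|x| <= 1 + c.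
Proof.
move=> le_xc; apply: (@le_trans _ _ (1 + `|x| ^+ 2)); last by rewrite lerD2l.
have [le_x1 | lt1x] := real_leP (normr_real x) (@real1 _).
  by apply: (le_trans le_x1); rewrite lerDl exprn_ge0.
apply: (@le_trans _ _ (`|x| ^+ 2)); last by rewrite lerDr.
by rewrite expr2 ler_peMr // ltW.
Qed.

End FrobeniusNorm.

Section Regularisation.
Variables (C : numClosedFieldType) (p q : nat) (M : 'M[C]_(p, q)).

Definition regnormal (d : C) : 'M[C]_q := ctmx M *m M + d%:M.

(* For d > 0 the regularised matrix N scales Frobenius norms up by at least d,
   as |N U|^2 = |M^* M U|^2 + 2 d |M U|^2 + d^2 |U|^2. *)
Lemma regnormal_expand (d : C) m (U : 'M[C]_(q, m)) :
  0 < d -> d ^+ 2 * fnorm2 U <= fnorm2 (regnormal d *m U).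
Proof.
rewrite /regnormal => d_gt0; set A := ctmx M *m M.
have ctA : ctmx A = A by rewrite /A ctmxM ctmxK.
have ctd : d^* = d by rewrite geC0_conj // ltW.
rewrite mulmxDl mul_scalar_mx /fnorm2 ctmxD ctmxZ ctd mulmxDl !mulmxDr.
rewrite !mxtraceD -!scalemxAl -!scalemxAr !mxtraceZ (ctmxM A U) ctA.
have normMU : \tr (ctmx U *m A *m U) = fnorm2 (M *m U).
  by rewrite /fnorm2 ctmxM /A !mulmxA.
have normAU : \tr (ctmx U *m A *m (A *m U)) = fnorm2 (A *m U).
  by rewrite /fnorm2 ctmxM ctA mulmxA.
rewrite normAU normMU mulmxA normMU mulrA -expr2 addrA lerDr.
by rewrite !addr_ge0 ?mulr_ge0 ?fnorm2_ge0 // ltW.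
Qed.

(* In particular it is injective, hence invertible. *)
Lemma regnormal_unit (d : C) : 0 < d -> regnormal d \in unitmx.
Proof.
move=> d_gt0; have ctN : ctmx (regnormal d) = regnormal d.
  by rewrite /regnormal ctmxD ctmx_scalar ctmxM ctmxK geC0_conj // ltW.
rewrite -row_free_unit -kermx_eq0; apply/eqP.
set V := kermx (regnormal d).
have NV0 : regnormal d *m ctmx V = 0 by rewrite -ctN -ctmxM mulmx_ker ctmx0.
have := regnormal_expand (ctmx V) d_gt0; rewrite NV0.
rewrite [fnorm2 0]/fnorm2 ctmx0 mul0mx mxtrace0 => bound.
have : fnorm2 (ctmx V) = 0.
  apply/eqP; rewrite eq_le fnorm2_ge0 andbT.
  by rewrite -(@ler_pM2l _ (d ^+ 2)) ?exprn_gt0 // mulr0.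
by move/fnorm2_eq0=> V0; rewrite -(ctmxK V) V0 ctmx0.
Qed.

End Regularisation.

Section Tikhonov.
Variables (C : numClosedFieldType) (p q : nat) (M : 'M[C]_(p, q)) (Y : 'M[C]_(q, p)).
Hypothesis MP_MY : is_MP M Y.

Let Z := Y *m ctmx Y *m Y.

Lemma normal_MP : ctmx M *m M *m Y = ctmx M.
Proof. by case: MP_MY => MYM _ MYh _; rewrite -mulmxA -MYh -ctmxM MYM. Qed.

Lemma normal_MPZ : ctmx M *m M *m Z = Y.
Proof.
case: MP_MY => _ YMY _ YMh.
by rewrite /Z !mulmxA normal_MP -ctmxM YMh YMY.
Qed.

Lemma tikhonov_error (d : C) : 0 < d ->
  invmx (regnormal M d) *m ctmx M - Y
  = d *: (d *: (invmx (regnormal M d) *m Z) - Z).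
Proof.
move=> d_gt0; have unitN := regnormal_unit M d_gt0.
set N := regnormal M d; set U := invmx N *m Z.
have NU : N *m U = Z by rewrite /U mulKVmx.
have NY : N *m Y = ctmx M + d *: Y by rewrite mulmxDl normal_MP mul_scalar_mx.
have NZ : N *m Z = Y + d *: Z by rewrite mulmxDl normal_MPZ mul_scalar_mx.
have solved : N *m (Y + d *: (d *: U - Z)) = ctmx M.
  rewrite mulmxDr -scalemxAr mulmxBr -scalemxAr NU NY NZ.
  by apply/matrixP=> i j; rewrite !mxE; ring.
by rewrite -solved mulKmx // addrC addKr.
Qed.

(* Both terms of the error are bounded uniformly in d (the second one by
   regnormal_expand), so the error is O(d). *)
Lemma tikhonov_limit :
  mx_lim0 (fun d => invmx (regnormal M d) *m ctmx M) Y.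
Proof.
set B := 1 + fnorm2 Z.
have B_gt0 : 0 < B by rewrite ltr_wpDr ?fnorm2_ge0.
have boundZ i j : `|Z i j| <= B by apply: normr_le1D; apply: fnorm2_entry.
have boundU d i j : 0 < d -> `|d * (invmx (regnormal M d) *m Z) i j| <= B.
  move=> d_gt0; apply: normr_le1D; set U := invmx _ *m Z.
  rewrite normrM exprMn (ger0_norm (ltW d_gt0)).
  apply: le_trans (ler_wpM2l (exprn_ge0 _ (ltW d_gt0)) (fnorm2_entry U i j)) _.
  by apply: le_trans (regnormal_expand M U d_gt0) _; rewrite mulKVmx ?regnormal_unit.
move=> eps eps_gt0; exists (eps / (B + B)).
  exact: divr_gt0 eps_gt0 (addr_gt0 B_gt0 B_gt0).
move=> d d_gt0 d_lt i j.
have entryB (A1 A2 : 'M[C]_(q, p)) : (A1 - A2) i j = A1 i j - A2 i j by rewrite !mxE.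
have entryZ c (A1 : 'M[C]_(q, p)) : (c *: A1) i j = c * A1 i j by rewrite !mxE.
move/matrixP/(_ i j): (tikhonov_error d_gt0); rewrite !(entryB, entryZ) => ->.
have err_le : `|d * (invmx (regnormal M d) *m Z) i j - Z i j| <= B + B.
  by apply: le_trans (ler_normB _ _) _; rewrite lerD ?boundU ?boundZ.
have small_d : d * (B + B) < eps by rewrite -ltr_pdivlMr // addr_gt0.
rewrite normrM (ger0_norm (ltW d_gt0)); apply: le_lt_trans small_d.
exact: (ler_wpM2l (ltW d_gt0)).
Qed.

End Tikhonov.

Section Limits.
Variable C : numClosedFieldType.

Lemma lim0_ext m p (f g : C -> 'M[C]_(m, p)) L :
  (forall d, 0 < d -> f d = g d) -> mx_lim0 f L -> mx_lim0 g L.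
Proof.
move=> fg lim_f eps eps_gt0; have [d0 d0_gt0 close] := lim_f eps eps_gt0.
by exists d0 => // d d_gt0 d_lt; rewrite -fg //; apply: close.
Qed.

Lemma lim0_trmx m p (f : C -> 'M[C]_(m, p)) L :
  mx_lim0 f L -> mx_lim0 (fun d => (f d)^T) L^T.
Proof.
move=> lim_f eps eps_gt0; have [d0 d0_gt0 close] := lim_f eps eps_gt0.
by exists d0 => // d d_gt0 d_lt i j; rewrite !mxE; apply: close.
Qed.

Lemma lim0_mull m p r (A : 'M[C]_(r, m)) (f : C -> 'M[C]_(m, p)) L :
  mx_lim0 f L -> mx_lim0 (fun d => A *m f d) (A *m L).
Proof.
move=> lim_f eps eps_gt0; set S := \sum_i \sum_l `|A i l|.
have S_ge0 : 0 <= S by do 2!apply: sumr_ge0 => ? _.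
have S1_gt0 : 0 < S + 1 by rewrite ltr_wpDl.
set e := eps / (S + 1); have e_gt0 : 0 < e by rewrite divr_gt0.
have [d0 d0_gt0 close] := lim_f e e_gt0.
exists d0 => // d d_gt0 d_lt i j; rewrite !mxE -sumrB.
apply: le_lt_trans (ler_norm_sum _ _ _) _.
have rowS : \sum_l `|A i l| <= S.
  by apply: (ler_sum_term (F := fun i' => \sum_l `|A i' l|)) => i'; apply: sumr_ge0.
apply: (@le_lt_trans _ _ (S * e)).
  apply: (@le_trans _ _ (\sum_l `|A i l| * e)).
    apply: ler_sum => l _; rewrite -mulrBr normrM.
    by apply: (ler_wpM2l (normr_ge0 _)); apply: ltW; apply: close.
  by rewrite -mulr_suml; apply: (ler_wpM2r (ltW e_gt0)).
by rewrite /e mulrCA gtr_pMr // ltr_pdivrMr // mul1r ltrDl.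
Qed.

Lemma lim0_mulr m p r (B : 'M[C]_(p, r)) (f : C -> 'M[C]_(m, p)) L :
  mx_lim0 f L -> mx_lim0 (fun d => f d *m B) (L *m B).
Proof.
move=> lim_f; have lim_t := lim0_trmx (lim0_mull B^T (lim0_trmx lim_f)).
rewrite trmx_mul !trmxK in lim_t.
by apply: (lim0_ext _ lim_t) => d _; rewrite trmx_mul !trmxK.
Qed.

End Limits.

Section Congruence.
Variables (C : numClosedFieldType) (n : nat) (k : 'M[C]_n).
Hypotheses (k_unit : k \in unitmx) (Kn_fact : Kn C n = k *m ctmx k).

Definition kcongr (P : 'M[C]_n) : 'M[C]_n := ctmx (invmx k) *m P *m invmx k.

Lemma ctmxk_unit : ctmx k \in unitmx.
Proof. by rewrite ctmx_unitmx. Qed.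

Lemma kcongrK (X : 'M[C]_n) : kcongr (ctmx k *m X *m k) = X.
Proof.
by rewrite /kcongr ctmx_invmx !mulmxA mulVmx ?ctmxk_unit // mul1mx mulmxK.
Qed.

Lemma circ_kcongr (P Q : 'M[C]_n) : circ (kcongr P) (kcongr Q) = kcongr (P *m Q).
Proof.
by rewrite /circ /kcongr Kn_fact ctmx_invmx !mulmxA mulmxKV // mulmxK ?ctmxk_unit.
Qed.

Lemma ctmx_kcongr (P : 'M[C]_n) : ctmx (kcongr P) = kcongr (ctmx P).
Proof. by rewrite /kcongr !ctmxM ctmxK !mulmxA. Qed.

Lemma MP_kcongr (P Q : 'M[C]_n) : is_MP P Q -> is_circMP (kcongr P) (kcongr Q).
Proof.
case=> h1 h2 h3 h4.
by split; rewrite ?circ_kcongr ?ctmx_kcongr ?h1 ?h2 ?h3 ?h4.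
Qed.

Definition circ_regnormal (X : 'M[C]_n) (d : C) : 'M[C]_n :=
  ctmx X *m Kn C n *m X *m Kn C n + d%:M.

Lemma kcongr_regularised (M : 'M[C]_n) (d : C) :
  circ_regnormal (kcongr M) d = ctmx (invmx k) *m regnormal M d *m ctmx k.
Proof.
rewrite /circ_regnormal ctmx_kcongr /kcongr /regnormal Kn_fact ctmx_invmx.
have unitKs := ctmxk_unit.
rewrite mulmxDr mulmxDl; congr (_ + _); last by rewrite scalar_mxC mulmxKV.
by rewrite !mulmxA mulmxKV // mulmxK // mulmxKV // !mulmxA.
Qed.

Lemma kcongr_regularised_unit (M : 'M[C]_n) (d : C) :
  0 < d -> circ_regnormal (kcongr M) d \in unitmx.
Proof.
move=> d_gt0; rewrite kcongr_regularised !unitmx_mul regnormal_unit //.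
by rewrite !ctmx_unitmx unitmx_inv k_unit.
Qed.

Lemma kcongr_regularised_solve (M : 'M[C]_n) (d : C) : 0 < d ->
  invmx (circ_regnormal (kcongr M) d) *m ctmx (kcongr M)
  = kcongr (invmx (regnormal M d) *m ctmx M).
Proof.
move=> d_gt0; have unitN := regnormal_unit M d_gt0.
have solve : circ_regnormal (kcongr M) d *m kcongr (invmx (regnormal M d) *m ctmx M)
             = ctmx (kcongr M).
  rewrite kcongr_regularised ctmx_kcongr /kcongr ctmx_invmx !mulmxA.
  by rewrite mulmxK ?ctmxk_unit // -(mulmxA _ (regnormal M d)) mulmxV // mulmx1.
by rewrite -solve mulKmx ?kcongr_regularised_unit.
Qed.

End Congruence.

Theorem theorem6 (C : numClosedFieldType) (n : nat) (X k : 'M[C]_n)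
  (hk : k \in unitmx) (hK : Kn C n = k *m ctmx k) :
  forall Y : 'M[C]_n, is_MP (ctmx k *m X *m k) Y ->
  let Xo := ctmx (invmx k) *m Y *m invmx k in
  [/\ is_circMP X Xo,
      is_MP (phi X) (phi Xo),
      in_S (phi Xo),
      (forall delta : C, 0 < delta ->
         ctmx X *m Kn C n *m X *m Kn C n + delta%:M \in unitmx)
    & exists2 L : 'M[C]_n,
        mx_lim0 (fun delta : C =>
          invmx (ctmx X *m Kn C n *m X *m Kn C n + delta%:M) *m ctmx X) L &
        is_MP (phi X) (phi L)].
Proof.
move=> Y MP_Y Xo.
have [M MP_M ->] : exists2 M, is_MP M Y & X = kcongr k M.
  by exists (ctmx k *m X *m k) => //; rewrite kcongrK.
have circMP_Xo : is_circMP (kcongr k M) Xo by apply: MP_kcongr.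
have MP_phi := circMP_phi circMP_Xo.
split=> //; first exact: in_S_phi.
  by move=> d d_gt0; apply: kcongr_regularised_unit.
exists Xo => //.
apply: lim0_ext (lim0_mulr _ (lim0_mull _ (tikhonov_limit MP_M))) => d d_gt0.
by rewrite kcongr_regularised_solve.
Qed.
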